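(* There exists a sequence $f_{1,\infty}=(f_1,f_2,\dots)$ of surjective continuous maps from $I=[0,1]$ to itself (not converging uniformly) such that the nonautonomous system $(I,f_{1,\infty})$ has positive topological entropy, $h(f_{1,\infty})>0$, and is not Li–Yorke chaotic.
   Context: A nonautonomous dynamical system (NDS) $(X,f_{1,\infty})$ consists of a compact metric space $(X,\varrho)$ and a sequence $f_{1,\infty}=(f_n)_{n\ge1}$ of continuous maps $X\to X$, with iterates $f_1^0(x)=x$, $f_1^n=f_n\circ\dots\circ f_1$. Li–Yorke pair: distinct $x,y$ with $\limsup_{n}\varrho(f_1^n(x),f_1^n(y))>0$ and $\liminf_{n}\varrho(f_1^n(x),f_1^n(y))=0$; the NDS is Li–Yorke chaotic if $X$ contains an uncountable set any two distinct points of which form a Li–Yorke pair. Topological entropy: put $\varrho_n(x,y)=\max_{0\le j\le n-1}\varrho(f_1^{j}(x),f_1^{j}(y))$; $E$ is $(n,\varepsilon)$-separated if $\varrho_n(x,y)>\varepsilon$ for distinct $x,y\in E$; with $s_n(\varepsilon)$ the maximal cardinality of such a set, $h(f_{1,\infty})=\lim_{\varepsilon\to0}\limsup_{n\to\infty}\frac1n\log s_n(\varepsilon)$. *)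

From Stdlib Require Import Reals List.
Import ListNotations.
Open Scope R_scope.

Definition I01 (x : R) : Prop := 0 <= x <= 1.
Definition rho (x y : R) : R := Rabs (x - y).

(* A nonautonomous system is a sequence f : nat -> R -> R; only the maps
   f 1, f 2, ... are used (f_n = f n); f 0 is irrelevant. *)

Definition maps_into_I (g : R -> R) : Prop := forall x, I01 x -> I01 (g x).
Definition continuous_on_I (g : R -> R) : Prop :=
  forall x, I01 x -> forall eps, 0 < eps -> exists delta, 0 < delta /\
    forall y, I01 y -> rho y x < delta -> rho (g y) (g x) < eps.
Definition surjective_on_I (g : R -> R) : Prop :=
  forall y, I01 y -> exists x, I01 x /\ g x = y.

Fixpoint iter (f : nat -> R -> R) (n : nat) (x : R) : R :=
  match n with
  | O => x
  | S m => f (S m) (iter f m x)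
  end.

Definition converges_uniformly (f : nat -> R -> R) : Prop :=
  exists g : R -> R, forall eps, 0 < eps -> exists N : nat,
    forall n, (N <= n)%nat -> forall x, I01 x -> rho (f n x) (g x) < eps.

Definition limsup_dist_pos (f : nat -> R -> R) (x y : R) : Prop :=
  exists delta, 0 < delta /\ forall N : nat, exists n, (N <= n)%nat /\
    delta < rho (iter f n x) (iter f n y).
Definition liminf_dist_zero (f : nat -> R -> R) (x y : R) : Prop :=
  forall eps, 0 < eps -> forall N : nat, exists n, (N <= n)%nat /\
    rho (iter f n x) (iter f n y) < eps.
Definition LiYorke_pair (f : nat -> R -> R) (x y : R) : Prop :=
  x <> y /\ limsup_dist_pos f x y /\ liminf_dist_zero f x y.

Definition countable_set (S : R -> Prop) : Prop :=
  exists c : R -> nat, forall x y, S x -> S y -> c x = c y -> x = y.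

Definition LiYorke_chaotic (f : nat -> R -> R) : Prop :=
  exists S : R -> Prop, (forall x, S x -> I01 x) /\ ~ countable_set S /\
    forall x y, S x -> S y -> x <> y -> LiYorke_pair f x y.

(* Bowen metric rho_n(x,y) = max_{0<=j<=n-1} rho(f_1^j x, f_1^j y);
   rho_n(x,y) > eps iff some j < n has rho(f_1^j x, f_1^j y) > eps. *)
Definition bowen_gt (f : nat -> R -> R) (n : nat) (eps x y : R) : Prop :=
  exists j, (j < n)%nat /\ eps < rho (iter f j x) (iter f j y).

Definition separated (f : nat -> R -> R) (n : nat) (eps : R) (E : list R) : Prop :=
  NoDup E /\ (forall x, In x E -> I01 x) /\
  forall x y, In x E -> In y E -> x <> y -> bowen_gt f n eps x y.

(* s_n(eps) >= k : there is an (n,eps)-separated set of cardinality k *)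
Definition sep_card_ge (f : nat -> R -> R) (n : nat) (eps : R) (k : nat) : Prop :=
  exists E, separated f n eps E /\ length E = k.

(* h(f) = lim_{eps->0} limsup_n (1/n) log s_n(eps) > 0.
   Since s_n(eps) is nonincreasing in eps, the limit in eps is the supremum
   over eps > 0, so h > 0 iff for some eps > 0 the limsup is > 0, i.e. iff
   there are eps > 0 and c > 0 with (1/n) log s_n(eps) > c for infinitely
   many n (equivalently, s_n(eps) >= k for some k with (1/n) ln k > c). *)
Definition positive_entropy (f : nat -> R -> R) : Prop :=
  exists eps, 0 < eps /\ exists c, 0 < c /\
    forall N : nat, exists n, (N <= n)%nat /\ (0 < n)%nat /\
      exists k, sep_card_ge f n eps k /\ c < ln (INR k) / INR n.

(* The system applies the collapse map [collapse] at the times n = 2^m and the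
   map [horseshoe] at all other times.  [horseshoe] fixes [1/2, 1] pointwise
   and acts on [0, 1/2] as a full 2-shift (its two inverse branches z/3 and
   (z+1)/3 have images at distance >= 1/6), so the 2^m - 1 consecutive
   horseshoe steps between times 2^m and 2^(m+1) separate 2^(2^m - 1) points:
   the entropy is at least (ln 2)/4.  On the other hand [collapse] sends
   [0, 1/2] to the fixed point 0 and doubles the distance to 1 on [1/2, 1], so
   every x < 1 lands on 0 at some time 2^m and stays there; hence no two points
   of [0, 1) form a Li-Yorke pair and a scrambled set has at most two points. *)
From Stdlib Require Import Reals List.
From Stdlib Require Import PeanoNat Lra Lia IndefiniteDescription Classical.
Import ListNotations.
Open Scope R_scope.

Lemma lipschitz_continuous_on_I (g : R -> R) (L : R) : 0 < L ->
  (forall x y, Rabs (g y - g x) <= L * Rabs (y - x)) -> continuous_on_I g.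
Proof.
  intros HL Hg x _ eps Heps. exists (eps / L). split.
  - apply Rdiv_lt_0_compat; assumption.
  - intros y _ Hy. unfold rho in *. eapply Rle_lt_trans; [apply Hg|].
    apply (Rmult_lt_compat_l L) in Hy; [|exact HL].
    replace (L * (eps / L)) with eps in Hy by (field; lra). exact Hy.
Qed.

Lemma iter_surjective_on_I (f : nat -> R -> R) :
  (forall n, (1 <= n)%nat -> surjective_on_I (f n)) ->
  forall n, surjective_on_I (iter f n).
Proof.
  intros Hf n. induction n as [|n IH]; intros z Hz.
  - exists z. auto.
  - destruct (Hf (S n) ltac:(lia) z Hz) as [w [Hw <-]].
    destruct (IH w Hw) as [x [Hx <-]]. exists x. auto.
Qed.

Lemma iter_add_const (f : nat -> R -> R) (g : R -> R) (n k : nat) (x : R) :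
  (forall i, (1 <= i <= k)%nat -> f (n + i)%nat = g) ->
  iter f (n + k) x = Nat.iter k g (iter f n x).
Proof.
  induction k as [|k IH]; intros Hg.
  - rewrite Nat.add_0_r. reflexivity.
  - rewrite Nat.add_succ_r. simpl. rewrite <- Nat.add_succ_r, Hg by lia.
    rewrite IH; [reflexivity|]. intros i Hi. apply Hg. lia.
Qed.

Lemma iter_fixed_point (f : nat -> R -> R) (p x : R) (n d : nat) :
  (forall k, f k p = p) -> iter f n x = p -> iter f (n + d) x = p.
Proof.
  intros Hp Hn. induction d as [|d IH].
  - rewrite Nat.add_0_r. exact Hn.
  - rewrite Nat.add_succ_r. simpl. rewrite IH. apply Hp.
Qed.

Lemma not_LiYorke_chaotic_of_eventually_const (f : nat -> R -> R) (a p : R) :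
  (forall x, I01 x -> x <> a ->
     exists N, forall n, (N <= n)%nat -> iter f n x = p) ->
  ~ LiYorke_chaotic f.
Proof.
  intros Hconst [S [HSI [Hnc HLY]]]. apply Hnc.
  exists (fun x => if Req_EM_T x a then 0%nat else 1%nat).
  intros x y Hx Hy Hc.
  destruct (Req_EM_T x a) as [->|Hxa], (Req_EM_T y a) as [->|Hya];
    try discriminate; [reflexivity|].
  apply NNPP. intros Hxy.
  destruct (HLY x y Hx Hy Hxy) as [_ [[d [Hd Hlimsup]] _]].
  destruct (Hconst x (HSI x Hx) Hxa) as [N1 H1].
  destruct (Hconst y (HSI y Hy) Hya) as [N2 H2].
  destruct (Hlimsup (N1 + N2)%nat) as [n [Hn Hdist]].
  rewrite H1, H2 in Hdist by lia. unfold rho in Hdist.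
  rewrite Rminus_diag, Rabs_R0 in Hdist. lra.
Qed.

Lemma not_converges_uniformly_of_oscillation (f : nat -> R -> R) (x0 d : R) :
  I01 x0 -> 0 < d ->
  (forall N, exists n m, (N <= n)%nat /\ (N <= m)%nat /\ d < rho (f n x0) (f m x0)) ->
  ~ converges_uniformly f.
Proof.
  intros Hx0 Hd Hosc [g Hg]. destruct (Hg (d / 2) ltac:(lra)) as [N HN].
  destruct (Hosc N) as [n [m [Hn [Hm Hnm]]]].
  pose proof (HN n Hn x0 Hx0). pose proof (HN m Hm x0 Hx0).
  unfold rho in *. split_Rabs; lra.
Qed.

Lemma bowen_gt_neq (f : nat -> R -> R) (n : nat) (eps x y : R) :
  0 <= eps -> bowen_gt f n eps x y -> x <> y.
Proof.
  intros Heps [j [_ Hj]] ->. unfold rho in Hj.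
  rewrite Rminus_diag, Rabs_R0 in Hj. lra.
Qed.

Lemma separated_map {A : Type} (f : nat -> R -> R) (n : nat) (eps : R)
    (g : A -> R) (l : list A) :
  0 <= eps -> NoDup l -> (forall a, In a l -> I01 (g a)) ->
  (forall a b, In a l -> In b l -> a <> b -> bowen_gt f n eps (g a) (g b)) ->
  separated f n eps (map g l).
Proof.
  intros Heps Hl HI Hsep. split; [|split].
  - apply NoDup_map_NoDup_ForallPairs; [|exact Hl].
    intros a b Ha Hb Hab. apply NNPP. intros Hne.
    exact (bowen_gt_neq f n eps _ _ Heps (Hsep a b Ha Hb Hne) Hab).
  - intros x Hx. apply in_map_iff in Hx. destruct Hx as [a [<- Ha]]. auto.
  - intros x y Hx Hy Hxy. apply in_map_iff in Hx, Hy.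
    destruct Hx as [a [<- Ha]], Hy as [b [<- Hb]].
    apply Hsep; auto. intros ->. auto.
Qed.

Fixpoint bool_words (L : nat) : list (list bool) :=
  match L with
  | O => [nil]
  | S L' => map (cons true) (bool_words L') ++ map (cons false) (bool_words L')
  end.

Lemma bool_words_length L : length (bool_words L) = (2 ^ L)%nat.
Proof.
  induction L as [|L IH]; simpl; [reflexivity|].
  rewrite length_app, !length_map, IH. lia.
Qed.

Lemma in_bool_words L s : In s (bool_words L) -> length s = L.
Proof.
  revert s; induction L as [|L IH]; simpl; intros s Hs.
  - destruct Hs as [<-|[]]. reflexivity.
  - apply in_app_or in Hs. destruct Hs as [Hs|Hs]; apply in_map_iff in Hs;
      destruct Hs as [t [<- Ht]]; simpl; f_equal; auto.
Qed.

Lemma bool_words_NoDup L : NoDup (bool_words L).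
Proof.
  induction L as [|L IH]; simpl.
  - constructor; [intros []|constructor].
  - apply NoDup_app.
    + apply NoDup_map_NoDup_ForallPairs; [|exact IH].
      intros a b _ _ H. injection H. auto.
    + apply NoDup_map_NoDup_ForallPairs; [|exact IH].
      intros a b _ _ H. injection H. auto.
    + intros s H1 H2. apply in_map_iff in H1, H2.
      destruct H1 as [t [<- _]], H2 as [u [H _]]. discriminate.
Qed.

Definition horseshoe (y : R) : R :=
  if Rle_dec y (1/6) then 3 * y
  else if Rle_dec y (1/3) then 1 - 3 * y
  else if Rle_dec y (1/2) then 3 * y - 1
  else y.

Definition collapse (y : R) : R := if Rle_dec y (1/2) then 0 else 2 * y - 1.

Definition is_pow2 (n : nat) : bool := Nat.eqb (2 ^ Nat.log2 n) n.

Definition sys (n : nat) : R -> R := if is_pow2 n then collapse else horseshoe.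

Lemma horseshoe_lipschitz x y :
  Rabs (horseshoe y - horseshoe x) <= 3 * Rabs (y - x).
Proof. unfold horseshoe; repeat destruct Rle_dec; split_Rabs; lra. Qed.

Lemma collapse_lipschitz x y :
  Rabs (collapse y - collapse x) <= 3 * Rabs (y - x).
Proof. unfold collapse; repeat destruct Rle_dec; split_Rabs; lra. Qed.

Lemma horseshoe_maps_into_I : maps_into_I horseshoe.
Proof. unfold maps_into_I, I01, horseshoe; intros; repeat destruct Rle_dec; lra. Qed.

Lemma collapse_maps_into_I : maps_into_I collapse.
Proof. unfold maps_into_I, I01, collapse; intros; repeat destruct Rle_dec; lra. Qed.

Lemma horseshoe_left_branch z : 0 <= z <= 1/2 -> horseshoe (z / 3) = z.
Proof. intros; unfold horseshoe; repeat destruct Rle_dec; lra. Qed.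

Lemma horseshoe_right_branch z : 0 <= z <= 1/2 -> horseshoe ((z + 1) / 3) = z.
Proof. intros; unfold horseshoe; repeat destruct Rle_dec; lra. Qed.

Lemma horseshoe_upper y : 1/2 < y -> horseshoe y = y.
Proof. intros; unfold horseshoe; repeat destruct Rle_dec; lra. Qed.

Lemma horseshoe_lower y : 0 <= y <= 1/2 -> 0 <= horseshoe y <= 1/2.
Proof. intros; unfold horseshoe; repeat destruct Rle_dec; lra. Qed.

Lemma horseshoe_surjective : surjective_on_I horseshoe.
Proof.
  intros z Hz. unfold I01 in *. destruct (Rle_dec z (1/2)).
  - exists (z / 3). split; [lra|]. apply horseshoe_left_branch. lra.
  - exists z. split; [lra|]. apply horseshoe_upper. lra.
Qed.

Lemma collapse_surjective : surjective_on_I collapse.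
Proof.
  intros z Hz. unfold I01 in *. exists ((z + 1) / 2).
  split; [lra|]. unfold collapse; destruct Rle_dec; lra.
Qed.

Lemma iter_horseshoe_lower k y :
  0 <= y <= 1/2 -> 0 <= Nat.iter k horseshoe y <= 1/2.
Proof. intros Hy. induction k; simpl; [exact Hy|]. apply horseshoe_lower. exact IHk. Qed.

Lemma iter_horseshoe_upper k y : 1/2 < y -> Nat.iter k horseshoe y = y.
Proof. intros Hy. induction k; simpl; [reflexivity|]. rewrite IHk. apply horseshoe_upper, Hy. Qed.

Lemma is_pow2_pow m : is_pow2 (2 ^ m) = true.
Proof. unfold is_pow2. rewrite Nat.log2_pow2 by lia. apply Nat.eqb_refl. Qed.

Lemma is_pow2_between m n : (2 ^ m < n < 2 ^ S m)%nat -> is_pow2 n = false.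
Proof.
  intros Hn. unfold is_pow2. rewrite (Nat.log2_unique n m) by lia.
  apply Nat.eqb_neq. lia.
Qed.

Lemma sys_between m i : (1 <= i < 2 ^ m)%nat -> sys (2 ^ m + i) = horseshoe.
Proof. intros Hi. unfold sys. rewrite (is_pow2_between m); [reflexivity|]. simpl. lia. Qed.

Lemma sys_maps_into_I n : maps_into_I (sys n).
Proof. unfold sys; destruct is_pow2; [exact collapse_maps_into_I | exact horseshoe_maps_into_I]. Qed.

Lemma sys_continuous_on_I n : continuous_on_I (sys n).
Proof.
  apply (lipschitz_continuous_on_I _ 3); [lra|].
  unfold sys; destruct is_pow2; [exact collapse_lipschitz | exact horseshoe_lipschitz].
Qed.

Lemma sys_surjective n : surjective_on_I (sys n).
Proof. unfold sys; destruct is_pow2; [exact collapse_surjective | exact horseshoe_surjective]. Qed.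

Lemma sys_zero n : sys n 0 = 0.
Proof. unfold sys, collapse, horseshoe; destruct is_pow2; repeat destruct Rle_dec; lra. Qed.

Lemma iter_sys_I n x : I01 x -> I01 (iter sys n x).
Proof.
  intros Hx. induction n; simpl; [exact Hx|]. apply sys_maps_into_I, IHn.
Qed.

Lemma iter_sys_block m x : iter sys (2 ^ S m) x =
  collapse (Nat.iter (2 ^ m - 1) horseshoe (iter sys (2 ^ m) x)).
Proof.
  pose proof (Nat.pow_nonzero 2 m ltac:(lia)).
  replace (2 ^ S m)%nat with (S (2 ^ m + (2 ^ m - 1))) by (simpl; lia).
  simpl iter. replace (S (2 ^ m + (2 ^ m - 1))) with (2 ^ S m)%nat by (simpl; lia).
  unfold sys at 1. rewrite is_pow2_pow, (iter_add_const _ horseshoe); [reflexivity|].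
  intros i Hi. apply sys_between. lia.
Qed.

Lemma iter_sys_pow2 x m : I01 x ->
  iter sys (2 ^ m) x = 0 \/ 1 - iter sys (2 ^ m) x = 2 ^ S m * (1 - x).
Proof.
  intros Hx. induction m as [|m IH].
  - simpl. unfold sys. change (is_pow2 1) with true. unfold collapse.
    destruct Rle_dec; [left | right]; lra.
  - rewrite iter_sys_block.
    pose proof (iter_sys_I (2 ^ m) x Hx) as HI. unfold I01 in HI.
    set (y := iter sys (2 ^ m) x) in *.
    destruct (Rle_dec y (1/2)).
    + left. pose proof (iter_horseshoe_lower (2 ^ m - 1) y ltac:(lra)).
      unfold collapse; destruct Rle_dec; lra.
    + rewrite iter_horseshoe_upper by lra. right.
      unfold collapse; destruct Rle_dec; [lra|].
      destruct IH as [IH|IH]; [lra|].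
      change (2 ^ S (S m)) with (2 * 2 ^ S m). rewrite Rmult_assoc, <- IH. lra.
Qed.

Lemma iter_sys_eventually_zero x : I01 x -> x <> 1 ->
  exists N, forall n, (N <= n)%nat -> iter sys n x = 0.
Proof.
  intros Hx Hx1. assert (Hpos : 0 < 1 - x) by (unfold I01 in Hx; lra).
  destruct (INR_archimed (1 - x) 1 Hpos) as [M HM].
  assert (Hgrow : 1 < 2 ^ S M * (1 - x)).
  { pose proof (Nat.pow_gt_lin_r 2 M ltac:(lia)) as HMlt.
    apply lt_INR in HMlt. rewrite pow_INR in HMlt. change (INR 2) with 2 in HMlt.
    change (2 ^ S M) with (2 * 2 ^ M).
    pose proof (pow_R1_Rle 2 M ltac:(lra)). nra. }
  assert (H0 : iter sys (2 ^ M) x = 0).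
  { destruct (iter_sys_pow2 x M Hx) as [H|H]; [exact H|].
    pose proof (iter_sys_I (2 ^ M) x Hx). unfold I01 in *. lra. }
  exists (2 ^ M)%nat. intros n Hn. replace n with (2 ^ M + (n - 2 ^ M))%nat by lia.
  apply iter_fixed_point; [apply sys_zero | exact H0].
Qed.

Fixpoint word_point (s : list bool) : R :=
  match s with
  | nil => 0
  | b :: s' => if b then (word_point s' + 1) / 3 else word_point s' / 3
  end.

Lemma word_point_range s : 0 <= word_point s <= 1/2.
Proof. induction s as [|b s IH]; simpl; [lra|]. destruct b; lra. Qed.

Lemma horseshoe_word_point b s : horseshoe (word_point (b :: s)) = word_point s.
Proof.
  pose proof (word_point_range s). simpl.
  destruct b; [apply horseshoe_right_branch | apply horseshoe_left_branch]; lra.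
Qed.

Lemma word_point_separated s t : length s = length t -> s <> t ->
  exists i, (i < length s)%nat /\
    1/8 < rho (Nat.iter i horseshoe (word_point s)) (Nat.iter i horseshoe (word_point t)).
Proof.
  revert t; induction s as [|b s IH]; intros t Hlen Hne.
  - destruct t; simpl in *; [congruence | discriminate].
  - destruct t as [|b' t]; simpl in Hlen; [discriminate|].
    destruct (Bool.bool_dec b b') as [<-|Hb].
    + destruct (IH t ltac:(lia) ltac:(congruence)) as [i [Hi Hsep]].
      exists (S i). split; [simpl; lia|].
      rewrite !Nat.iter_succ_r, !horseshoe_word_point. exact Hsep.
    + exists 0%nat. split; [simpl; lia|]. simpl. unfold rho.
      pose proof (word_point_range s). pose proof (word_point_range t).
      destruct b, b'; try congruence; split_Rabs; lra.
Qed.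

Lemma word_point_I s : I01 (word_point s).
Proof. pose proof (word_point_range s). unfold I01. lra. Qed.

Definition word_preimage (m : nat) (s : list bool) : R :=
  proj1_sig (constructive_indefinite_description _
    (iter_surjective_on_I sys (fun n _ => sys_surjective n) (2 ^ m)
       (word_point s) (word_point_I s))).

Lemma word_preimage_spec m s :
  I01 (word_preimage m s) /\ iter sys (2 ^ m) (word_preimage m s) = word_point s.
Proof. unfold word_preimage. destruct constructive_indefinite_description; assumption. Qed.

Lemma word_preimage_separated m s t :
  length s = (2 ^ m - 1)%nat -> length t = (2 ^ m - 1)%nat -> s <> t ->
  bowen_gt sys (2 ^ S m) (1/8) (word_preimage m s) (word_preimage m t).
Proof.
  intros Hs Ht Hne.
  destruct (word_point_separated s t ltac:(congruence) Hne) as [i [Hi Hsep]].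
  assert (Hsys : forall j, (1 <= j <= i)%nat -> sys (2 ^ m + j)%nat = horseshoe)
    by (intros j Hj; apply sys_between; lia).
  exists (2 ^ m + i)%nat. split; [simpl; lia|].
  rewrite !(iter_add_const _ _ _ _ _ Hsys).
  rewrite (proj2 (word_preimage_spec m s)), (proj2 (word_preimage_spec m t)).
  exact Hsep.
Qed.

Lemma sys_sep_card_ge m :
  sep_card_ge sys (2 ^ S m) (1/8) (2 ^ (2 ^ m - 1)).
Proof.
  exists (map (word_preimage m) (bool_words (2 ^ m - 1))). split.
  - apply separated_map; [lra | apply bool_words_NoDup | |].
    + intros s _. apply word_preimage_spec.
    + intros s t Hs Ht. apply word_preimage_separated;
        [exact (in_bool_words _ _ Hs) | exact (in_bool_words _ _ Ht)].
  - rewrite length_map. apply bool_words_length.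
Qed.

Lemma block_entropy_bound m : (1 <= m)%nat ->
  ln 2 / 8 < ln (INR (2 ^ (2 ^ m - 1))) / INR (2 ^ S m).
Proof.
  intros Hm. pose proof ln_lt_2.
  assert (Hpow : 2 <= 2 ^ m).
  { replace m with (S (m - 1)) by lia. simpl. pose proof (pow_R1_Rle 2 (m - 1) ltac:(lra)). lra. }
  assert (Hm1 : (1 <= 2 ^ m)%nat) by (pose proof (Nat.pow_nonzero 2 m); lia).
  rewrite !pow_INR. change (INR 2) with 2.
  rewrite ln_pow, minus_INR, pow_INR by (lra || exact Hm1).
  change (INR 2) with 2. change (INR 1) with 1. change (2 ^ S m) with (2 * 2 ^ m).
  apply Rmult_lt_reg_r with (2 * 2 ^ m); [lra|].
  replace ((2 ^ m - 1) * ln 2 / (2 * 2 ^ m) * (2 * 2 ^ m)) with ((2 ^ m - 1) * ln 2)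
    by (field; lra).
  nra.
Qed.

Lemma sys_positive_entropy : positive_entropy sys.
Proof.
  exists (1/8). split; [lra|].
  exists (ln 2 / 8). split; [pose proof ln_lt_2; lra|].
  intros N. exists (2 ^ S (S N))%nat.
  pose proof (Nat.pow_gt_lin_r 2 (S (S N)) ltac:(lia)).
  split; [lia|]. split; [lia|].
  exists (2 ^ (2 ^ S N - 1))%nat. split.
  - apply sys_sep_card_ge.
  - apply block_entropy_bound. lia.
Qed.

Lemma sys_not_converges_uniformly : ~ converges_uniformly sys.
Proof.
  apply (not_converges_uniformly_of_oscillation sys (1/2) (1/4));
    [unfold I01; lra | lra |].
  intros N. exists (2 ^ S N)%nat, (2 ^ S N + 1)%nat.
  pose proof (Nat.pow_gt_lin_r 2 (S N) ltac:(lia)).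
  split; [lia|]. split; [lia|].
  unfold sys. rewrite is_pow2_pow, (is_pow2_between (S N)) by (rewrite (Nat.pow_succ_r' 2 (S N)); lia).
  unfold rho, collapse, horseshoe. repeat destruct Rle_dec; split_Rabs; lra.
Qed.

Theorem mainTheorem2 :
  exists f : nat -> R -> R,
    (forall n, (1 <= n)%nat ->
       maps_into_I (f n) /\ continuous_on_I (f n) /\ surjective_on_I (f n)) /\
    ~ converges_uniformly f /\
    positive_entropy f /\
    ~ LiYorke_chaotic f.
Proof.
  exists sys. split; [|split; [|split]].
  - intros n _. split; [|split];
      [apply sys_maps_into_I | apply sys_continuous_on_I | apply sys_surjective].
  - exact sys_not_converges_uniformly.
  - exact sys_positive_entropy.
  - exact (not_LiYorke_chaotic_of_eventually_const sys 1 0 iter_sys_eventually_zero).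
Qed.
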